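(* For 3-Majority or 2-Choices, for every $t\ge1$ the following hold. (i) For every opinion $i$, conditioned on $\mathcal F_{t-1}$, the random variable $\alpha_t(i)-\mathbb E_{t-1}[\alpha_t(i)]$ satisfies the $(1/n,s)$-Bernstein condition, where - $s=\alpha_{t-1}(i)/n$ for 3-Majority; - $s=\alpha_{t-1}(i)(\alpha_{t-1}(i)+\gamma_{t-1})/n$ for 2-Choices. (ii) For distinct opinions $i,j$, conditioned on $\mathcal F_{t-1}$, the random variable $\delta_t(i,j)-\mathbb E_{t-1}[\delta_t(i,j)]$ satisfies the $(2/n,s)$-Bernstein condition, where - $s=\frac2n(\alpha_{t-1}(i)+\alpha_{t-1}(j))$ for 3-Majority; - $s=\frac1n(\alpha_{t-1}(i)+\alpha_{t-1}(j))(\alpha_{t-1}(i)+\alpha_{t-1}(j)+\gamma_{t-1})$ for 2-Choices. (iii) Conditioned on $\mathcal F_{t-1}$, the random variable $\gamma_{t-1}-\gamma_t$ satisfies the one-sided $(2\sqrt{\gamma_{t-1}}/n,\,s)$-Bernstein condition, where - $s=\frac4n\gamma_{t-1}^{1.5}$ for 3-Majority; - $s=\frac8n\gamma_{t-1}^2$ for 2-Choices.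
   Context: **Setting.** Let $V$ be a set of $n$ vertices and $k\in\{1,\dots,n\}$. A configuration is a map $\mathsf{opn}\colon V\to[k]$. The process is synchronous: each round $t\ge1$ produces $\mathsf{opn}_t$ from $\mathsf{opn}_{t-1}$, and all vertices make their choices independently. **3-Majority.** Each vertex $v$ samples $w_1,w_2,w_3\in V$ independently and uniformly, with replacement. It sets $\mathsf{opn}_t(v)=\mathsf{opn}_{t-1}(w_1)$ if $\mathsf{opn}_{t-1}(w_1)=\mathsf{opn}_{t-1}(w_2)$, and $\mathsf{opn}_t(v)=\mathsf{opn}_{t-1}(w_3)$ otherwise. **2-Choices.** Each vertex $v$ samples $w_1,w_2\in V$ independently and uniformly, with replacement. It sets $\mathsf{opn}_t(v)=\mathsf{opn}_{t-1}(w_1)$ if $\mathsf{opn}_{t-1}(w_1)=\mathsf{opn}_{t-1}(w_2)$, and $\mathsf{opn}_t(v)=\mathsf{opn}_{t-1}(v)$ otherwise. **Basic quantities.** - $\alpha_t(i)=|\{v:\mathsf{opn}_t(v)=i\}|/n$. - $\gamma_t=\sum_{i\in[k]}\alpha_t(i)^2$. - $\delta_t(i,j)=\alpha_t(i)-\alpha_t(j)$. **Conditioning.** $\mathcal F_t$ is generated by $\mathsf{opn}_0,\dots,\mathsf{opn}_t$, and $\mathbb E_{t-1}[\cdot]=\mathbb E[\cdot\mid\mathcal F_{t-1}]$. **Bernstein conditions.** Let $D,s\ge0$. - $X$ satisfies the $(D,s)$-Bernstein condition if $\mathbb E[e^{\lambda X}]\le\exp\big(\frac{\lambda^2 s/2}{1-|\lambda|D/3}\big)$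 for all real $\lambda$ with $|\lambda|D<3$. - It satisfies the one-sided $(D,s)$-Bernstein condition if this holds for all $\lambda\ge0$ with $\lambda D<3$. - Conditioned on $\mathcal F_{t-1}$, these are required with conditional expectations, almost surely. *)

From mathcomp Require Import all_boot all_order all_algebra.
From mathcomp Require Import all_classical all_reals all_analysis.
Set Implicit Arguments. Unset Strict Implicit. Unset Printing Implicit Defensive.
Import Order.TTheory GRing.Theory Num.Theory.
Local Open Scope ring_scope.

(* Vertices V = 'I_n, opinions [k] = 'I_k; a configuration is opn : V -> [k]. *)
Definition config (n k : nat) := {ffun 'I_n -> 'I_k}.

Section Defs.
Variable R : realType.
Variables n k : nat.

Definition alpha (c : config n k) (i : 'I_k) : R :=
  #|[set v | c v == i]|%:R / n%:R.

Definition gamma (c : config n k) : R := \sum_(i < k) alpha c i ^+ 2.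

Definition delta (c : config n k) (i j : 'I_k) : R := alpha c i - alpha c j.

Definition step3 (c : config n k) (om : {ffun 'I_n -> 'I_n * 'I_n * 'I_n})
  : config n k :=
  [ffun v => let: (w1, w2, w3) := om v in
             if c w1 == c w2 then c w1 else c w3].

Definition step2 (c : config n k) (om : {ffun 'I_n -> 'I_n * 'I_n})
  : config n k :=
  [ffun v => let: (w1, w2) := om v in
             if c w1 == c w2 then c w1 else c v].

(* Expectation w.r.t. the uniform distribution on a finite type.  The uniform
   distribution on {ffun 'I_n -> S} is exactly "every vertex samples
   independently and uniformly (with replacement)". *)
Definition Eunif (T : finType) (f : T -> R) : R :=
  (\sum_(x : T) f x) / #|T|%:R.

(* Conditional expectation E_{t-1}[f(opn_t)] given opn_{t-1} = c. *)
Definition E3 (c : config n k) (f : config n k -> R) : R :=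
  Eunif (fun om : {ffun 'I_n -> 'I_n * 'I_n * 'I_n} => f (step3 c om)).
Definition E2 (c : config n k) (f : config n k -> R) : R :=
  Eunif (fun om : {ffun 'I_n -> 'I_n * 'I_n} => f (step2 c om)).

Definition bernstein (E : (config n k -> R) -> R) (X : config n k -> R)
  (D s : R) : Prop :=
  forall lam : R, `|lam| * D < 3 ->
    E (fun c' => expR (lam * X c')) <= expR ((lam ^+ 2 * s / 2) / (1 - `|lam| * D / 3)).

Definition bernstein1 (E : (config n k -> R) -> R) (X : config n k -> R)
  (D s : R) : Prop :=
  forall lam : R, 0 <= lam -> lam * D < 3 ->
    E (fun c' => expR (lam * X c')) <= expR ((lam ^+ 2 * s / 2) / (1 - lam * D / 3)).

End Defs.

Arguments alpha {R n k} c i.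
Arguments gamma {R n k} c.
Arguments delta {R n k} c i j.

From mathcomp Require Import all_boot all_order all_algebra.
From mathcomp Require Import all_classical all_reals all_analysis.
From mathcomp Require Import ring lra.
Set Implicit Arguments. Unset Strict Implicit. Unset Printing Implicit Defensive.
Import Order.TTheory GRing.Theory Num.Theory.
Local Open Scope ring_scope.

(* Given the configuration c = opn_{t-1}, the vertices choose their new opinions
   independently, vertex v adopting opinion l with probability
   alpha(l)^2 + (1 - gamma) alpha(l) under 3-Majority and
   alpha(l)^2 + (1 - gamma) [l = c v] under 2-Choices.  Hence alpha_t(i) and
   delta_t(i,j) are sums of n independent terms of range 1/n and 2/n, and
   gamma_{t-1} - gamma_t is bounded above by the sum of the independent terms
   (2/n)(gamma_{t-1} - alpha_{t-1}(opn_t(v))), because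
   sum_l (alpha_t(l) - alpha_{t-1}(l))^2 >= 0.  The inequality
   e^y <= 1 + y + y^2/(2(1 - B/3)) for y <= B < 3 bounds the moment generating
   function of each term by its variance, and the variances are summed using
   gamma^2 <= sum_l alpha(l)^3 <= gamma^(3/2) and sum_l alpha(l)^4 <= gamma^2. *)

Lemma sumr_mul_indicator (R : pzSemiRingType) (I : finType) (F : I -> R) i :
  \sum_l F l * (l == i)%:R = F i.
Proof.
rewrite (bigD1 i) //= eqxx mulr1 big1 ?addr0 // => l /negbTE ->.
by rewrite mulr0.
Qed.

Section ExpBounds.
Variable R : realType.
Implicit Types x y B : R.

Lemma expR_le_geometric_tail x : 0 <= x -> x < 3 ->
  expR x <= 1 + x + x ^+ 2 / (2 * (1 - x / 3)).
Proof.
move=> x_ge0 x_lt3; have x3_gt0 : 0 < 1 - x / 3 by lra.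
set C := 1 + x + _.
pose S m := \sum_(0 <= i < m) x ^+ i / i`!%:R.
(* Partial sum plus a geometric bound on the rest of the series decreases in d,
   because x^(d+3)/(d+3)! <= (x/3) x^(d+2)/(d+2)!. *)
have partial_le d : S d.+2 + x ^+ d.+2 / d.+2`!%:R / (1 - x / 3) <= C.
  elim: d => [|d IH].
    rewrite /S !big_nat_recr //= big_nil add0r expr0 expr1 fact0 !divr1.
    by rewrite /C (_ : 2`!%:R = 2 :> R) // invfM mulrA.
  apply: le_trans IH; rewrite /S big_nat_recr //= -addrA lerD2l.
  set u := x ^+ d.+2 / d.+2`!%:R.
  have u_ge0 : 0 <= u by rewrite divr_ge0 // exprn_ge0.
  have -> : x ^+ d.+3 / d.+3`!%:R = u * (x / d.+3%:R).
    rewrite /u exprS factS natrM invfM; field.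
    by rewrite -natrD !pnatr_eq0 /= -lt0n fact_gt0.
  have : u * (x / d.+3%:R) <= u * (x / 3).
    by rewrite ler_wpM2l // ler_wpM2l // lef_pV2 ?posrE // ler_nat.
  move: (x / d.+3%:R) => r ur_le.
  by rewrite ler_pdivlMr // mulrDl divfK ?gt_eqF //; nra.
have le_C : 1 + x <= C by rewrite /C lerDl divr_ge0 ?sqr_ge0 //; lra.
rewrite /expR; apply: limr_le; first exact: is_cvg_series_exp_coeff.
apply: nearW => -[|[|d]].
- by rewrite /series /= big_geq //; lra.
- by rewrite /series /= big_nat1 /exp_coeff /= expr0 fact0 divr1; lra.
- apply: le_trans (partial_le d); rewrite /series /S /exp_coeff /= lerDl.
  by rewrite !divr_ge0 ?exprn_ge0 // ltW.
Qed.

Lemma expR_ge_cubic x : 0 <= x -> 1 + x + x ^+ 2 / 2 + x ^+ 3 / 6 <= expR x.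
Proof.
move=> x_ge0.
apply: le_trans (nondecreasing_cvgn_le _ (is_cvg_series_exp_coeff x) 4).
  rewrite /series /exp_coeff /= !big_nat_recr //= big_nil add0r.
  by rewrite (_ : 3`!%:R = 6 :> R) // expr0 expr1 fact0 !divr1.
apply: nondecreasing_series => m _ _.
by rewrite /exp_coeff /= divr_ge0 // exprn_ge0.
Qed.

Lemma expR_le_quadratic_nonpos y : y <= 0 -> expR y <= 1 + y + y ^+ 2 / 2.
Proof.
move=> y_le0; have := @expR_ge_cubic (- y) ltac:(lra).
have := expRxMexpNx_1 y; have := expR_gt0 y.
move: (expR y) (expR (- y)) => e e' e_gt0 ee' le_e'.
have p_gt0 : 0 < 1 + y + y ^+ 2 / 2 by nra.
have : 1 <= (1 + y + y ^+ 2 / 2) * (1 + - y + (- y) ^+ 2 / 2 + (- y) ^+ 3 / 6).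
  have : 0 <= (- y) ^+ 3 by rewrite exprn_ge0 //; lra.
  nra.
move=> le_pq; have : 1 <= (1 + y + y ^+ 2 / 2) * e'.
  by apply: le_trans le_pq _; rewrite ler_wpM2l // ltW.
nra.
Qed.

Lemma expR_le_bernstein y B : 0 <= B -> B < 3 -> y <= B ->
  expR y <= 1 + y + y ^+ 2 / (2 * (1 - B / 3)).
Proof.
move=> B_ge0 B_lt3 y_leB.
have y2_ge0 := sqr_ge0 y.
case: (leP y 0) => [y_le0|y_gt0].
  apply: (le_trans (expR_le_quadratic_nonpos y_le0)).
  rewrite lerD2l invfM mulrA ler_pdivlMr; last lra.
  have : 0 <= y ^+ 2 / 2 by lra.
  move: (y ^+ 2 / 2) => u; nra.
apply: (le_trans (expR_le_geometric_tail (ltW y_gt0) (le_lt_trans y_leB B_lt3))).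
by rewrite lerD2l ler_wpM2l // lef_pV2 ?posrE ?mulr_gt0 //; lra.
Qed.

Lemma bernstein_exponent_le (lam V s D : R) :
  V <= s -> 0 < 1 - D / 3 ->
  lam ^+ 2 * V / (2 * (1 - D / 3)) <= lam ^+ 2 * s / 2 / (1 - D / 3).
Proof.
move=> le_Vs D3_gt0; rewrite invfM mulrA ler_wpM2r ?invr_ge0 ?(ltW D3_gt0) //.
by have := sqr_ge0 lam; nra.
Qed.

End ExpBounds.

Section UniformExpectation.
Variable R : realType.

Lemma Eunif_prod_ffun (n : nat) (S : finType) (F : 'I_n -> S -> R) :
  Eunif (fun om : {ffun 'I_n -> S} => \prod_v F v (om v)) = \prod_v Eunif (F v).
Proof.
rewrite /Eunif big_split /= prodr_const card_ord -bigA_distr_bigA.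
by rewrite card_ffun card_ord natrX exprVn.
Qed.

Lemma Eunif_sum (T I : finType) (f : I -> T -> R) :
  Eunif (fun x => \sum_i f i x) = \sum_i Eunif (f i).
Proof. by rewrite /Eunif exchange_big mulr_suml. Qed.

Lemma EunifMr (T : finType) (f : T -> R) (a : R) :
  Eunif (fun x => f x * a) = Eunif f * a.
Proof. by rewrite /Eunif -mulr_suml mulrAC. Qed.

Lemma Eunif_cst (T : finType) (a : R) : (0 < #|T|)%N -> Eunif (fun _ : T => a) = a.
Proof.
move=> T_gt0; rewrite /Eunif sumr_const -[a *+ _]mulr_natr.
by rewrite (_ : #|xpredT| = #|T|) // mulfK // pnatr_eq0 -lt0n.
Qed.

Lemma ler_Eunif (T : finType) (f g : T -> R) :
  (forall x, f x <= g x) -> Eunif f <= Eunif g.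
Proof. by move=> le_fg; rewrite ler_wpM2r ?invr_ge0 ?ler0n // ler_sum. Qed.

Lemma Eunif_pair (T1 T2 : finType) (f : T1 -> T2 -> R) :
  Eunif (fun p : T1 * T2 => f p.1 p.2) = Eunif (fun x => Eunif (f x)).
Proof.
by rewrite /Eunif card_prod natrM invfM mulrA -pair_bigA -mulr_suml mulrAC.
Qed.

Lemma Eunif_ffun_app (n : nat) (S : finType) (v : 'I_n) (f : S -> R) :
  (0 < #|S|)%N -> Eunif (fun om : {ffun 'I_n -> S} => f (om v)) = Eunif f.
Proof.
move=> S_gt0; pose F u s := if u == v then f s else 1.
have -> : (fun om : {ffun 'I_n -> S} => f (om v)) = (fun om => \prod_u F u (om u)).
  apply: funext => om; rewrite (bigD1 v) //= /F eqxx big1 ?mulr1 //.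
  by move=> u /negbTE ->.
rewrite Eunif_prod_ffun (bigD1 v) //= /F eqxx big1 ?mulr1 // => u /negbTE ->.
exact: Eunif_cst.
Qed.

End UniformExpectation.

Section FiniteDistribution.
Variables (R : realType) (I : finType) (P : I -> R).
Hypotheses (P_ge0 : forall i, 0 <= P i) (P_sum1 : \sum_i P i = 1).

Definition fmean (g : I -> R) : R := \sum_i P i * g i.
Definition fvar (g : I -> R) : R := \sum_i P i * (g i - fmean g) ^+ 2.

Lemma prob_le1 i : P i <= 1.
Proof. by rewrite -P_sum1 (bigD1 i) //= lerDl sumr_ge0. Qed.

Lemma fvar_le_moment2 g t : fvar g <= fmean (fun i => (g i - t) ^+ 2).
Proof.
rewrite /fvar /fmean; set m := fmean g.
have e i : P i * (g i - t) ^+ 2 = P i * (g i - m) ^+ 2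
    + 2 * (m - t) * (P i * g i) - 2 * (m - t) * m * P i + (m - t) ^+ 2 * P i.
  by ring.
rewrite (eq_bigr _ (fun i _ => e i)) !big_split /= sumrN -!mulr_sumr P_sum1.
by rewrite -/(fmean g) -/m; have := sqr_ge0 (m - t); lra.
Qed.

Lemma fvarE g : fvar g = fmean (fun i => g i ^+ 2) - fmean g ^+ 2.
Proof.
rewrite /fvar; set m := fmean g.
have e i : P i * (g i - m) ^+ 2 = P i * g i ^+ 2 - 2 * m * (P i * g i) + m ^+ 2 * P i.
  by ring.
rewrite (eq_bigr _ (fun i _ => e i)) !big_split /= sumrN -!mulr_sumr P_sum1.
by rewrite -/(fmean g) -/m /fmean; ring.
Qed.

Lemma fvar_le_fmean_sqr g : fvar g <= fmean (fun i => g i ^+ 2).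
Proof. by rewrite fvarE gerBl sqr_ge0. Qed.

Lemma fmean_indicator (d : R) i : fmean (fun l => (l == i)%:R / d) = P i / d.
Proof.
by rewrite /fmean; under eq_bigr do rewrite mulrA; rewrite -mulr_suml sumr_mul_indicator.
Qed.

Lemma fmean_indicatorB (d : R) i j :
  fmean (fun l => ((l == i)%:R - (l == j)%:R) / d) = (P i - P j) / d.
Proof.
rewrite /fmean; under eq_bigr do rewrite mulrBl mulrBr.
rewrite sumrB -/(fmean (fun l => (l == i)%:R / d)).
by rewrite -/(fmean (fun l => (l == j)%:R / d)) !fmean_indicator mulrBl.
Qed.

Lemma fmean_sqr_indicator (d : R) i :
  fmean (fun l => ((l == i)%:R / d) ^+ 2) = P i / d ^+ 2.
Proof.
rewrite -fmean_indicator; congr fmean; apply: funext => l.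
by rewrite expr_div_n; case: (l == i); rewrite ?expr0n ?expr1n.
Qed.

Lemma fmean_sqr_indicatorB (d : R) i j : i != j ->
  fmean (fun l => (((l == i)%:R - (l == j)%:R) / d) ^+ 2) = (P i + P j) / d ^+ 2.
Proof.
move=> neq_ij; rewrite mulrDl -!fmean_indicator /fmean -big_split /=.
apply: eq_bigr => l _; rewrite -mulrDr -mulrDl expr_div_n; congr (_ * (_ / _)).
case: (boolP (l == i)) => [/eqP ->|_]; first by rewrite (negbTE neq_ij) /=; ring.
by case: (l == j) => /=; ring.
Qed.

Lemma fvar_indicator (d : R) i :
  fvar (fun l => (l == i)%:R / d) = (P i - P i ^+ 2) / d ^+ 2.
Proof. by rewrite fvarE fmean_sqr_indicator fmean_indicator mulrBl expr_div_n. Qed.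

Lemma fvar_indicatorB_le (d : R) i j : i != j ->
  fvar (fun l => ((l == i)%:R - (l == j)%:R) / d) <= (P i + P j) / d ^+ 2.
Proof.
by move=> neq_ij; rewrite -fmean_sqr_indicatorB // fvar_le_fmean_sqr.
Qed.

Lemma norm_indicator_centered_le (d : R) i l : 0 < d ->
  `|(l == i)%:R / d - fmean (fun l => (l == i)%:R / d)| <= 1 / d.
Proof.
move=> d_gt0; rewrite fmean_indicator -mulrBl normrM [`|d^-1|]gtr0_norm ?invr_gt0 //.
rewrite ler_pM2r ?invr_gt0 // ler_norml.
by have := P_ge0 i; have := prob_le1 i; case: (l == i) => /=; lra.
Qed.

Lemma norm_indicatorB_centered_le (d : R) i j l : 0 < d ->
  `|((l == i)%:R - (l == j)%:R) / d - fmean (fun l => ((l == i)%:R - (l == j)%:R) / d)|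
    <= 2 / d.
Proof.
move=> d_gt0; rewrite fmean_indicatorB -mulrBl normrM [`|d^-1|]gtr0_norm ?invr_gt0 //.
rewrite ler_pM2r ?invr_gt0 // ler_norml.
have := P_ge0 i; have := prob_le1 i; have := P_ge0 j; have := prob_le1 j.
by case: (l == i); case: (l == j) => /=; lra.
Qed.

Lemma fmean_expR_le_bernstein lam B g : 0 <= B -> B < 3 ->
  (forall i, lam * (g i - fmean g) <= B) ->
  fmean (fun i => expR (lam * g i)) <=
  expR (lam * fmean g + lam ^+ 2 * fvar g / (2 * (1 - B / 3))).
Proof.
move=> B_ge0 B_lt3 le_B; rewrite /fvar; set m := fmean g.
set K := 2 * (1 - B / 3).
have -> : fmean (fun i => expR (lam * g i)) =
          expR (lam * m) * \sum_i P i * expR (lam * (g i - m)).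
  rewrite /fmean mulr_sumr; apply: eq_bigr => i _.
  by rewrite mulrCA -expRD; congr (_ * expR _); ring.
rewrite expRD ler_wpM2l ?expR_ge0 //; apply: le_trans (expR_ge1Dx _).
apply: (@le_trans _ _ (\sum_i P i * (1 + lam * (g i - m) + (lam * (g i - m)) ^+ 2 / K))).
  by apply: ler_sum => i _; rewrite ler_wpM2l ?expR_le_bernstein.
have e i : P i * (1 + lam * (g i - m) + (lam * (g i - m)) ^+ 2 / K) =
    P i + lam * (P i * g i) - lam * m * P i + lam ^+ 2 / K * (P i * (g i - m) ^+ 2).
  by ring.
rewrite (eq_bigr _ (fun i _ => e i)) !big_split /= sumrN -!mulr_sumr P_sum1.
by rewrite -/(fmean g) -/m le_eqVlt; apply/orP; left; apply/eqP; ring.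
Qed.

End FiniteDistribution.

Section Configuration.
Context [R : realType].
Variables (n k : nat) (c : config n k).
Hypothesis n_gt0 : (0 < n)%N.

Local Notation N := (n%:R : R).
Local Notation a := (@alpha R n k c).
Local Notation g := (@gamma R n k c).
Local Notation m3 := (\sum_l a l ^+ 3).
Local Notation m4 := (\sum_l a l ^+ 4).

Lemma natn_neq0 : N != 0.
Proof. by rewrite pnatr_eq0 -lt0n. Qed.

Lemma alphaE (c' : config n k) i : alpha c' i = \sum_v (c' v == i)%:R / N :> R.
Proof.
rewrite /alpha -sum1dep_card natr_sum big_mkcond /= mulr_suml.
by apply: eq_bigr => v _; case: (c' v == i).
Qed.

Lemma deltaE (c' : config n k) i j :
  delta c' i j = \sum_v ((c' v == i)%:R - (c' v == j)%:R) / N :> R.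
Proof. by rewrite /delta !alphaE -sumrB; apply: eq_bigr => v _; rewrite mulrBl. Qed.

Lemma natn_mul_alpha l : N * a l = \sum_w (c w == l)%:R.
Proof. by rewrite alphaE -mulr_suml mulrC divfK ?natn_neq0. Qed.

Lemma sum_by_opinion (F : 'I_k -> R) : \sum_w F (c w) = N * \sum_l a l * F l.
Proof.
under eq_bigr do rewrite -(sumr_mul_indicator F).
rewrite exchange_big mulr_sumr; apply: eq_bigr => l _.
rewrite -mulr_sumr mulrA natn_mul_alpha mulrC.
by congr (_ * _); apply: eq_bigr => w _; rewrite eq_sym.
Qed.

Lemma Eunif_opinion (F : 'I_k -> R) :
  Eunif (fun w : 'I_n => F (c w)) = \sum_l a l * F l.
Proof. by rewrite /Eunif sum_by_opinion card_ord mulrC mulKf ?natn_neq0. Qed.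

Lemma sum_alpha : \sum_l a l = 1.
Proof.
apply: (mulfI natn_neq0); rewrite mulr1.
have := sum_by_opinion (fun _ => 1); rewrite sumr_const card_ord.
by under eq_bigr do rewrite mulr1.
Qed.

Lemma alpha_ge0 l : 0 <= a l.
Proof. by rewrite divr_ge0 ?ler0n. Qed.

Lemma alpha_le1 l : a l <= 1.
Proof. exact: prob_le1 alpha_ge0 sum_alpha l. Qed.

Lemma gamma_ge0 : 0 <= g.
Proof. by rewrite sumr_ge0 // => l _; rewrite sqr_ge0. Qed.

Lemma sqr_alpha_le_gamma l : a l ^+ 2 <= g.
Proof. by rewrite /gamma (bigD1 l) //= lerDl sumr_ge0 // => j _; rewrite sqr_ge0. Qed.

Lemma gamma_le1 : g <= 1.
Proof.
rewrite -sum_alpha /gamma; apply: ler_sum => l _.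
by rewrite expr2 ler_piMr ?alpha_ge0 ?alpha_le1.
Qed.

Lemma alpha_le_sqrt_gamma l : a l <= Num.sqrt g.
Proof.
rewrite -(ger0_norm (alpha_ge0 l)) -sqrtr_sqr.
by rewrite ler_sqrt ?gamma_ge0 ?sqr_alpha_le_gamma.
Qed.

Lemma fmean_alpha_le_sqrt_gamma (p : 'I_k -> R) :
  (forall l, 0 <= p l) -> \sum_l p l = 1 -> fmean p a <= Num.sqrt g.
Proof.
move=> p_ge0 p_sum1; rewrite -[leRHS]mul1r -p_sum1 mulr_suml.
by apply: ler_sum => l _; rewrite ler_wpM2l ?alpha_le_sqrt_gamma.
Qed.

Lemma sum_alpha_poly (x1 x2 x3 x4 : R) :
  \sum_l (x1 * a l + x2 * a l ^+ 2 + x3 * a l ^+ 3 + x4 * a l ^+ 4) =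
  x1 + x2 * g + x3 * m3 + x4 * m4.
Proof. by rewrite !big_split /= -!mulr_sumr sum_alpha mulr1. Qed.

Lemma sqr_gamma_le_sum_alpha3 : g ^+ 2 <= m3.
Proof.
have : 0 <= \sum_l a l * (a l - g) ^+ 2.
  by apply: sumr_ge0 => l _; rewrite mulr_ge0 ?alpha_ge0 ?sqr_ge0.
have e l : a l * (a l - g) ^+ 2 =
    g ^+ 2 * a l + (- 2 * g) * a l ^+ 2 + 1 * a l ^+ 3 + 0 * a l ^+ 4 by ring.
by rewrite (eq_bigr _ (fun l _ => e l)) sum_alpha_poly; lra.
Qed.

Lemma sum_alpha3_le : m3 <= g * Num.sqrt g.
Proof.
rewrite /gamma mulr_suml; apply: ler_sum => l _.
by rewrite exprSr ler_wpM2l ?sqr_ge0 ?alpha_le_sqrt_gamma.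
Qed.

Lemma sum_alpha4_le : m4 <= g ^+ 2.
Proof.
rewrite [X in _ <= X]expr2 {2}/gamma mulr_sumr; apply: ler_sum => l _.
by rewrite (exprD _ 2 2) mulrC ler_wpM2r ?sqr_ge0 ?sqr_alpha_le_gamma.
Qed.

(* 0 <= \sum_l (alpha c' l - alpha c l)^2 linearizes gamma c' around gamma c. *)
Lemma gamma_drop_le (c' : config n k) :
  g - gamma c' <= \sum_v 2 / N * (g - a (c' v)).
Proof.
have : 0 <= \sum_l (alpha c' l - a l) ^+ 2.
  by apply: sumr_ge0 => l _; exact: sqr_ge0.
have e l : (alpha c' l - a l) ^+ 2 =
    alpha c' l ^+ 2 - 2 * (a l * alpha c' l) + a l ^+ 2 by ring.
rewrite (eq_bigr _ (fun l _ => e l)) !big_split sumrN /= -mulr_sumr.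
have -> : \sum_l a l * alpha c' l = \sum_v a (c' v) / N.
  under eq_bigr => l _ do rewrite (alphaE c') mulr_sumr.
  rewrite exchange_big; apply: eq_bigr => v _.
  under eq_bigr do rewrite mulrA.
  rewrite -mulr_suml; congr (_ / _); rewrite -(sumr_mul_indicator a (c' v)).
  by apply: eq_bigr => l _; rewrite eq_sym.
have -> : \sum_v 2 / N * (g - a (c' v)) = 2 * g - 2 * \sum_v a (c' v) / N.
  under eq_bigr do rewrite mulrBr.
  rewrite sumrB sumr_const card_ord -mulr_suml -mulr_sumr -mulr_natr.
  by field; rewrite natn_neq0.
by rewrite -/(gamma c') -/(gamma c) -mulr_suml; lra.
Qed.

Lemma sum_same_opinion (x : 'I_k -> R) (y : R) :
  \sum_i a i * \sum_j a j * (if i == j then x i else y) =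
  \sum_i a i ^+ 2 * x i + (1 - g) * y.
Proof.
have inner i : \sum_j a j * (if i == j then x i else y) = a i * x i + (1 - a i) * y.
  have others : \sum_(j | j != i) a j = 1 - a i.
    by rewrite -sum_alpha [in RHS](bigD1 i) //= addrAC subrr add0r.
  rewrite (bigD1 i) //= eqxx -others mulr_suml; congr (_ + _); apply: eq_bigr => j.
  by rewrite eq_sym => /negbTE ->.
under eq_bigr do rewrite inner.
have e i : a i * (a i * x i + (1 - a i) * y) = a i ^+ 2 * x i + y * a i - y * a i ^+ 2.
  by ring.
rewrite (eq_bigr _ (fun i _ => e i)) !big_split sumrN /= -!mulr_sumr sum_alpha.
by rewrite -/(gamma c); ring.
Qed.

End Configuration.

(* One synchronous round in which vertex v draws a uniform sample s : S,
   independently of the other vertices, and adopts opinion out v s, whose law is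
   P v; E is the expectation over the next configuration step om. *)
Section IndependentRound.
Variables (R : realType) (n k : nat) (S : finType).
Hypothesis n_gt0 : (0 < n)%N.
Variable out : 'I_n -> S -> 'I_k.
Variable P : 'I_n -> 'I_k -> R.
Hypothesis out_law : forall v (f : 'I_k -> R),
  Eunif (fun s => f (out v s)) = fmean (P v) f.
Hypotheses (P_ge0 : forall v l, 0 <= P v l) (P_sum1 : forall v, \sum_l P v l = 1).
Variable step : {ffun 'I_n -> S} -> config n k.
Hypothesis stepE : forall om v, step om v = out v (om v).

Local Notation N := (n%:R : R).
Local Notation E := (fun f : config n k -> R => Eunif (fun om => f (step om))).

Lemma card_samples_gt0 : (0 < #|S|)%N.
Proof.
have := out_law (Ordinal n_gt0) (fun _ => 1).
rewrite /fmean; under eq_bigr do rewrite mulr1.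
rewrite P_sum1 /Eunif; case: #|S| => //; rewrite invr0 mulr0 => /eqP.
by rewrite eq_sym oner_eq0.
Qed.

Lemma Eunif_sum_samples (h : 'I_k -> R) :
  Eunif (fun om : {ffun 'I_n -> S} => \sum_v h (out v (om v))) =
  \sum_v fmean (P v) h.
Proof.
rewrite Eunif_sum; apply: eq_bigr => v _.
by rewrite (Eunif_ffun_app v (fun s => h (out v s)) card_samples_gt0) out_law.
Qed.

Lemma Eunif_expR_sum_samples_le lam B (h : 'I_k -> R) : 0 <= B -> B < 3 ->
  (forall v l, lam * (h l - fmean (P v) h) <= B) ->
  Eunif (fun om : {ffun 'I_n -> S} => expR (lam * \sum_v h (out v (om v)))) <=
  expR (lam * \sum_v fmean (P v) h +
        lam ^+ 2 * (\sum_v fvar (P v) h) / (2 * (1 - B / 3))).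
Proof.
move=> B_ge0 B_lt3 le_B.
under eq_fun do rewrite mulr_sumr expR_sum.
rewrite (Eunif_prod_ffun (fun v s => expR (lam * h (out v s)))).
set K := 2 * (1 - B / 3).
have -> : lam * \sum_v fmean (P v) h + lam ^+ 2 * (\sum_v fvar (P v) h) / K =
    \sum_v (lam * fmean (P v) h + lam ^+ 2 * fvar (P v) h / K).
  by rewrite big_split /= -mulr_sumr -mulr_suml -mulr_sumr.
rewrite expR_sum.
apply: ler_prod => v _; apply/andP; split.
  by rewrite divr_ge0 // sumr_ge0 // => s _; rewrite expR_ge0.
by rewrite (out_law v (fun l => expR (lam * h l))) fmean_expR_le_bernstein.
Qed.

Lemma bernstein_sum_samples (X : config n k -> R) (h : 'I_k -> R) D s :
  (forall c', X c' = \sum_v h (c' v)) -> 0 <= D ->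
  (forall v l, `|h l - fmean (P v) h| <= D) -> \sum_v fvar (P v) h <= s ->
  bernstein E (fun c' => X c' - E X) D s.
Proof.
move=> XE D_ge0 le_D le_s lam lamD_lt3.
have X_step om : X (step om) = \sum_v h (out v (om v)).
  by rewrite XE; apply: eq_bigr => v _; rewrite stepE.
have -> : E X = \sum_v fmean (P v) h.
  by rewrite -Eunif_sum_samples; congr Eunif; apply: funext => om.
set M := \sum_v fmean (P v) h.
have -> : (fun om => expR (lam * (X (step om) - M))) =
    (fun om => expR (lam * \sum_v h (out v (om v))) * expR (- (lam * M))).
  by apply: funext => om; rewrite X_step -expRD; congr expR; ring.
rewrite EunifMr.
have lamD_ge0 : 0 <= `|lam| * D by rewrite mulr_ge0.
have le_lamD v l : lam * (h l - fmean (P v) h) <= `|lam| * D.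
  by apply: le_trans (ler_norm _) _; rewrite normrM ler_wpM2l.
have := Eunif_expR_sum_samples_le lamD_ge0 lamD_lt3 le_lamD.
move/(ler_wpM2r (expR_ge0 (- (lam * M)))) /le_trans; apply.
rewrite -expRD ler_expR addrAC subrr add0r.
by apply: bernstein_exponent_le => //; lra.
Qed.

Lemma bernstein1_sum_samples (X : config n k -> R) (h : 'I_k -> R) D s :
  (forall c', X c' <= \sum_v h (c' v)) -> \sum_v fmean (P v) h <= 0 -> 0 <= D ->
  (forall v l, h l - fmean (P v) h <= D) -> \sum_v fvar (P v) h <= s ->
  bernstein1 E X D s.
Proof.
move=> le_X mean_le0 D_ge0 le_D le_s lam lam_ge0 lamD_lt3.
have lamD_ge0 : 0 <= lam * D by rewrite mulr_ge0.
have le_lamD v l : lam * (h l - fmean (P v) h) <= lam * D by rewrite ler_wpM2l.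
have le_sum : Eunif (fun om => expR (lam * X (step om))) <=
    Eunif (fun om : {ffun 'I_n -> S} => expR (lam * \sum_v h (out v (om v)))).
  apply: ler_Eunif => om; rewrite ler_expR ler_wpM2l //; apply: le_trans (le_X _) _.
  by under eq_bigr do rewrite stepE.
apply: (le_trans le_sum).
apply: (le_trans (Eunif_expR_sum_samples_le lamD_ge0 lamD_lt3 le_lamD)).
rewrite ler_expR; have : lam * \sum_v fmean (P v) h <= 0 by rewrite mulr_ge0_le0.
by have := bernstein_exponent_le lam le_s (_ : 0 < 1 - lam * D / 3); lra.
Qed.

Lemma bernstein_alpha_round i s :
  \sum_v fvar (P v) (fun l => (l == i)%:R / N) <= s ->
  bernstein E (fun c' => alpha c' i - E (fun c'' => alpha c'' i)) (1 / N) s.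
Proof.
move=> le_s; have N_gt0 : 0 < N by rewrite ltr0n.
apply: (bernstein_sum_samples (fun c' => alphaE c' i) _ _ le_s).
  by rewrite divr_ge0 ?ltW.
by move=> v l; apply: norm_indicator_centered_le.
Qed.

Lemma bernstein_delta_round i j s :
  \sum_v fvar (P v) (fun l => ((l == i)%:R - (l == j)%:R) / N) <= s ->
  bernstein E (fun c' => delta c' i j - E (fun c'' => delta c'' i j)) (2 / N) s.
Proof.
move=> le_s; have N_gt0 : 0 < N by rewrite ltr0n.
apply: (bernstein_sum_samples (fun c' => deltaE c' i j) _ _ le_s).
  by rewrite divr_ge0 ?ltW.
by move=> v l; apply: norm_indicatorB_centered_le.
Qed.

Variable c : config n k.
Local Notation a := (@alpha R n k c).
Local Notation g := (@gamma R n k c).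

Lemma bernstein1_gamma_drop_round s :
  \sum_v fmean (P v) (fun l => 2 / N * (g - a l)) <= 0 ->
  \sum_v fvar (P v) (fun l => 2 / N * (g - a l)) <= s ->
  bernstein1 E (fun c' => g - gamma c') (2 * Num.sqrt g / N) s.
Proof.
move=> mean_le0 le_s; apply: bernstein1_sum_samples mean_le0 _ _ le_s.
- exact: gamma_drop_le.
- by rewrite divr_ge0 ?mulr_ge0 ?sqrtr_ge0.
move=> v l.
have -> : fmean (P v) (fun l => 2 / N * (g - a l)) = 2 / N * (g - fmean (P v) a).
  rewrite /fmean; under eq_bigr do rewrite mulrCA mulrBr.
  by rewrite -mulr_sumr sumrB -mulr_suml P_sum1 mul1r.
rewrite -mulrBr mulrAC ler_pM2r ?invr_gt0 ?ltr0n // ler_pM2l //.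
apply: le_trans (fmean_alpha_le_sqrt_gamma c (P_ge0 v) (P_sum1 v)).
by rewrite opprB addrC addrA subrK gerBl alpha_ge0.
Qed.

End IndependentRound.

Section Dynamics.
Context [R : realType].
Variables (n k : nat) (c : config n k).
Hypothesis n_gt0 : (0 < n)%N.

Local Notation N := (n%:R : R).
Local Notation a := (@alpha R n k c).
Local Notation g := (@gamma R n k c).

Lemma Eunif_opinion2 (F : 'I_k -> 'I_k -> R) :
  Eunif (fun s : 'I_n * 'I_n => F (c s.1) (c s.2)) = \sum_i a i * \sum_j a j * F i j.
Proof.
rewrite (Eunif_pair (fun w1 w2 => F (c w1) (c w2))).
under eq_fun => w1 do rewrite (Eunif_opinion c n_gt0 (F (c w1))).
exact: (Eunif_opinion c n_gt0 (fun i => \sum_j a j * F i j)).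
Qed.

Lemma Eunif_opinion3 (F : 'I_k -> 'I_k -> 'I_k -> R) :
  Eunif (fun s : 'I_n * 'I_n * 'I_n => F (c s.1.1) (c s.1.2) (c s.2)) =
  \sum_i a i * \sum_j a j * \sum_l a l * F i j l.
Proof.
rewrite (Eunif_pair (fun p w3 => F (c p.1) (c p.2) (c w3))).
under eq_fun => p do rewrite (Eunif_opinion c n_gt0 (F (c p.1) (c p.2))).
exact: (Eunif_opinion2 (fun i j => \sum_l a l * F i j l)).
Qed.

Definition maj3_out (v : 'I_n) (s : 'I_n * 'I_n * 'I_n) : 'I_k :=
  let: (w1, w2, w3) := s in if c w1 == c w2 then c w1 else c w3.

Definition choice2_out (v : 'I_n) (s : 'I_n * 'I_n) : 'I_k :=
  let: (w1, w2) := s in if c w1 == c w2 then c w1 else c v.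

Definition maj3_prob (l : 'I_k) : R := a l ^+ 2 + (1 - g) * a l.

Definition choice2_prob (v : 'I_n) (l : 'I_k) : R :=
  a l ^+ 2 + (1 - g) * (l == c v)%:R.

Lemma step3E om v : step3 c om v = maj3_out v (om v).
Proof. by rewrite ffunE. Qed.

Lemma step2E om v : step2 c om v = choice2_out v (om v).
Proof. by rewrite ffunE. Qed.

Lemma fmean_maj3_prob (H : 'I_k -> R) :
  fmean maj3_prob H = fmean (fun l => a l ^+ 2) H + (1 - g) * fmean a H.
Proof.
rewrite /fmean mulr_sumr -big_split /=.
by apply: eq_bigr => l _; rewrite /maj3_prob; ring.
Qed.

Lemma fmean_choice2_prob v (H : 'I_k -> R) :
  fmean (choice2_prob v) H = fmean (fun l => a l ^+ 2) H + (1 - g) * H (c v).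
Proof.
rewrite /fmean -(sumr_mul_indicator H (c v)) mulr_sumr -big_split /=.
by apply: eq_bigr => l _; rewrite /choice2_prob; ring.
Qed.

Lemma maj3_law v (f : 'I_k -> R) :
  Eunif (fun s => f (maj3_out v s)) = fmean maj3_prob f.
Proof.
have -> : (fun s => f (maj3_out v s)) =
    (fun s => f (if c s.1.1 == c s.1.2 then c s.1.1 else c s.2)).
  by apply: funext => -[[w1 w2] w3].
rewrite (Eunif_opinion3 (fun i j l => f (if i == j then i else l))).
have third i j : \sum_l a l * f (if i == j then i else l) =
    if i == j then f i else fmean a f.
  by case: (i == j) => //; rewrite -mulr_suml sum_alpha // mul1r.
under eq_bigr => i _ do under eq_bigr => j _ do rewrite third.
by rewrite sum_same_opinion // fmean_maj3_prob.
Qed.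

Lemma choice2_law v (f : 'I_k -> R) :
  Eunif (fun s => f (choice2_out v s)) = fmean (choice2_prob v) f.
Proof.
have -> : (fun s => f (choice2_out v s)) =
    (fun s => f (if c s.1 == c s.2 then c s.1 else c v)).
  by apply: funext => -[w1 w2].
rewrite (Eunif_opinion2 (fun i j => f (if i == j then i else c v))).
under eq_bigr => i _ do under eq_bigr => j _ do rewrite (fun_if f).
by rewrite sum_same_opinion // fmean_choice2_prob.
Qed.

Lemma maj3_prob_ge0 l : 0 <= maj3_prob l.
Proof.
rewrite addr_ge0 ?sqr_ge0 // mulr_ge0 ?alpha_ge0 // subr_ge0.
exact: gamma_le1.
Qed.

Lemma maj3_prob_sum1 : \sum_l maj3_prob l = 1.
Proof. by rewrite big_split /= -mulr_sumr sum_alpha // mulr1 addrC subrK. Qed.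

Lemma choice2_prob_ge0 v l : 0 <= choice2_prob v l.
Proof.
rewrite addr_ge0 ?sqr_ge0 // mulr_ge0 ?ler0n // subr_ge0.
exact: gamma_le1.
Qed.

Lemma choice2_prob_sum1 v : \sum_l choice2_prob v l = 1.
Proof.
rewrite big_split /= -mulr_sumr.
have -> : \sum_l ((l == c v)%:R : R) = 1.
  rewrite -[RHS](sumr_mul_indicator (fun=> 1) (c v)).
  by under [RHS]eq_bigr do rewrite mul1r.
by rewrite mulr1 addrC subrK.
Qed.

End Dynamics.

Section BernsteinConditions.
Context [R : realType].
Variables (n k : nat) (c : config n k).
Hypothesis n_gt0 : (0 < n)%N.

Local Notation N := (n%:R : R).
Local Notation a := (@alpha R n k c).
Local Notation a2 := (fun l => alpha c l ^+ 2 : R).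
Local Notation g := (@gamma R n k c).
Local Notation m3 := (\sum_l a l ^+ 3).
Local Notation m4 := (\sum_l a l ^+ 4).
Local Notation drop := (fun l => 2 / N * (g - a l)).

Let N_gt0 : 0 < N. Proof. by rewrite ltr0n. Qed.
Let N_neq0 : N != 0. Proof. exact: natn_neq0. Qed.

Lemma natn_mul_div_sqr (x : R) : N * (x / N ^+ 2) = x / N.
Proof. by field. Qed.

Lemma sum_vertices_const (x : R) : \sum_(v < n) x = N * x.
Proof. by rewrite sumr_const card_ord mulr_natl. Qed.

Lemma fmean_alpha_drop : fmean a drop = 0.
Proof.
have e l : a l * (2 / N * (g - a l)) =
    2 / N * (g * a l + (- 1) * a l ^+ 2 + 0 * a l ^+ 3 + 0 * a l ^+ 4) by ring.
by rewrite /fmean (eq_bigr _ (fun l _ => e l)) -mulr_sumr sum_alpha_poly //; ring.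
Qed.

Lemma fmean_alpha2_drop : fmean a2 drop = 2 / N * (g ^+ 2 - m3).
Proof.
have e l : a l ^+ 2 * (2 / N * (g - a l)) =
    2 / N * (0 * a l + g * a l ^+ 2 + (- 1) * a l ^+ 3 + 0 * a l ^+ 4) by ring.
by rewrite /fmean (eq_bigr _ (fun l _ => e l)) -mulr_sumr sum_alpha_poly //; ring.
Qed.

Lemma fmean_alpha_drop2 : fmean a (fun l => drop l ^+ 2) = (2 / N) ^+ 2 * (m3 - g ^+ 2).
Proof.
have e l : a l * (2 / N * (g - a l)) ^+ 2 =
    (2 / N) ^+ 2 * (g ^+ 2 * a l + (- 2 * g) * a l ^+ 2 + 1 * a l ^+ 3 + 0 * a l ^+ 4).
  by ring.
by rewrite /fmean (eq_bigr _ (fun l _ => e l)) -mulr_sumr sum_alpha_poly //; ring.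
Qed.

Lemma fmean_alpha2_drop2 :
  fmean a2 (fun l => drop l ^+ 2) = (2 / N) ^+ 2 * (g ^+ 3 - 2 * g * m3 + m4).
Proof.
have e l : a l ^+ 2 * (2 / N * (g - a l)) ^+ 2 =
    (2 / N) ^+ 2 * (0 * a l + g ^+ 2 * a l ^+ 2 + (- 2 * g) * a l ^+ 3 + 1 * a l ^+ 4).
  by ring.
by rewrite /fmean (eq_bigr _ (fun l _ => e l)) -mulr_sumr sum_alpha_poly //; ring.
Qed.

Lemma maj3_prob_sub_sqr_le i : maj3_prob c i - maj3_prob c i ^+ 2 <= a i.
Proof.
have a_ge0 : 0 <= a i := alpha_ge0 c i.
have g_le1 : g <= 1 := gamma_le1 c n_gt0.
have a2_le_g : a i ^+ 2 <= g := sqr_alpha_le_gamma c i.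
rewrite /maj3_prob; set x := 1 + a i - g.
have -> : a i ^+ 2 + (1 - g) * a i = a i * x by rewrite /x; ring.
case: (leP (a i) g) => [le_ag|lt_ga].
  have : 0 <= x <= 1 by apply/andP; split; rewrite /x; nra.
  by move=> /andP[x_ge0 x_le1]; have := sqr_ge0 (a i * x); nra.
have x_ge1 : 1 <= x by rewrite /x; lra.
have le_x : x - 1 <= a i * x ^+ 2 by rewrite /x; nra.
have -> : a i * x - (a i * x) ^+ 2 = a i - a i * (a i * x ^+ 2 - (x - 1)) by ring.
by rewrite gerBl mulr_ge0 // subr_ge0.
Qed.

Lemma maj3_bernstein_alpha i :
  bernstein (E3 c) (fun c' => alpha c' i - E3 c (fun c'' => alpha c'' i))
    (1 / N) (a i / N).
Proof.
apply: (bernstein_alpha_round n_gt0 (maj3_law c n_gt0) (fun _ => maj3_prob_ge0 c n_gt0)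
          (fun _ => maj3_prob_sum1 c n_gt0) (step3E c)).
under eq_bigr do rewrite fvar_indicator ?maj3_prob_sum1 //.
rewrite sum_vertices_const natn_mul_div_sqr ler_pM2r ?invr_gt0 //.
exact: maj3_prob_sub_sqr_le.
Qed.

Lemma maj3_prob_le l : maj3_prob c l <= 2 * a l.
Proof.
have a_ge0 : 0 <= a l := alpha_ge0 c l.
have a_le1 : a l <= 1 := alpha_le1 c n_gt0 l.
have g_ge0 : 0 <= g := gamma_ge0 c.
by rewrite /maj3_prob; nra.
Qed.

Lemma maj3_bernstein_delta i j : i != j ->
  bernstein (E3 c) (fun c' => delta c' i j - E3 c (fun c'' => delta c'' i j))
    (2 / N) (2 / N * (a i + a j)).
Proof.
move=> neq_ij.
apply: (bernstein_delta_round n_gt0 (maj3_law c n_gt0) (fun _ => maj3_prob_ge0 c n_gt0)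
          (fun _ => maj3_prob_sum1 c n_gt0) (step3E c)).
apply: le_trans (ler_sum _ (fun v _ =>
  fvar_indicatorB_le (maj3_prob_sum1 c n_gt0) N neq_ij)) _.
rewrite sum_vertices_const natn_mul_div_sqr mulrAC ler_pM2r ?invr_gt0 //.
by rewrite mulrDr lerD ?maj3_prob_le.
Qed.

Lemma maj3_bernstein1_gamma :
  bernstein1 (E3 c) (fun c' => g - gamma c')
    (2 * Num.sqrt g / N) (4 / N * (g * Num.sqrt g)).
Proof.
have g_ge0 : 0 <= g := gamma_ge0 c.
have m3_ge : g ^+ 2 <= m3 := sqr_gamma_le_sum_alpha3 c n_gt0.
have m3_le : m3 <= g * Num.sqrt g := sum_alpha3_le c.
have m4_le : m4 <= g ^+ 2 := sum_alpha4_le c.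
apply: (bernstein1_gamma_drop_round n_gt0 (maj3_law c n_gt0)
          (fun _ => maj3_prob_ge0 c n_gt0) (fun _ => maj3_prob_sum1 c n_gt0) (step3E c)).
  rewrite sum_vertices_const fmean_maj3_prob fmean_alpha2_drop fmean_alpha_drop.
  rewrite mulr0 addr0; apply: mulr_ge0_le0; first exact: ltW.
  by apply: mulr_ge0_le0; rewrite ?divr_ge0 ?subr_le0.
apply: le_trans (ler_sum _ (fun v _ =>
  fvar_le_fmean_sqr (maj3_prob_sum1 c n_gt0) drop)) _.
rewrite sum_vertices_const fmean_maj3_prob fmean_alpha2_drop2 fmean_alpha_drop2.
have -> : forall x y : R, N * ((2 / N) ^+ 2 * x + (1 - g) * ((2 / N) ^+ 2 * y)) =
    4 / N * (x + (1 - g) * y) by move=> x y; field.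
rewrite ler_pM2l ?divr_gt0 //.
have : 0 <= g * (m3 - g ^+ 2) by rewrite mulr_ge0 // subr_ge0.
by nra.
Qed.

(* The 1 - gamma mass of choice2_prob v sits at c v, so the second moment about
   h (c v) only sees the alpha l ^+ 2 part. *)
Lemma choice2_fvar_le v (h : 'I_k -> R) :
  fvar (choice2_prob c v) h <= fmean a2 (fun l => (h l - h (c v)) ^+ 2).
Proof.
apply: (le_trans (fvar_le_moment2 (choice2_prob_sum1 c v) h (h (c v)))).
by rewrite fmean_choice2_prob subrr expr0n mulr0 addr0.
Qed.

Lemma choice2_sum_fvar_le (h : 'I_k -> R) :
  \sum_v fvar (choice2_prob c v) h <=
  N * (fmean a2 (fun l => h l ^+ 2) - 2 * fmean a h * fmean a2 h +
       g * fmean a (fun l => h l ^+ 2)).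
Proof.
apply: le_trans (ler_sum _ (fun v _ => choice2_fvar_le v h)) _.
rewrite (sum_by_opinion c n_gt0 (fun u => fmean a2 (fun l => (h l - h u) ^+ 2))).
rewrite ler_pM2l //.
have e u : a u * fmean a2 (fun l => (h l - h u) ^+ 2) =
    a u * fmean a2 (fun l => h l ^+ 2) - 2 * fmean a2 h * (a u * h u)
    + g * (a u * h u ^+ 2).
  have e2 l : a l ^+ 2 * (h l - h u) ^+ 2 =
      a l ^+ 2 * h l ^+ 2 - 2 * h u * (a l ^+ 2 * h l) + h u ^+ 2 * a l ^+ 2 by ring.
  rewrite /fmean (eq_bigr _ (fun l _ => e2 l)) !big_split sumrN /= -!mulr_sumr.
  by rewrite -/(gamma c); ring.
rewrite (eq_bigr _ (fun u _ => e u)) !big_split sumrN /= -!mulr_sumr.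
rewrite -mulr_suml sum_alpha // mul1r /fmean.
by rewrite le_eqVlt; apply/orP; left; apply/eqP; ring.
Qed.

Lemma choice2_bernstein_alpha i :
  bernstein (E2 c) (fun c' => alpha c' i - E2 c (fun c'' => alpha c'' i))
    (1 / N) (a i * (a i + g) / N).
Proof.
have a_ge0 : 0 <= a i := alpha_ge0 c i.
apply: (bernstein_alpha_round n_gt0 (choice2_law c n_gt0) (choice2_prob_ge0 c n_gt0)
          (choice2_prob_sum1 c) (step2E c)).
apply: le_trans (choice2_sum_fvar_le _) _.
rewrite !fmean_sqr_indicator !fmean_indicator.
have -> : N * (a i ^+ 2 / N ^+ 2 - 2 * (a i / N) * (a i ^+ 2 / N) + g * (a i / N ^+ 2)) =
    (a i ^+ 2 - 2 * a i ^+ 3 + g * a i) / N by field.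
rewrite ler_pM2r ?invr_gt0 //.
have : 0 <= a i ^+ 3 by rewrite exprn_ge0.
by nra.
Qed.

Lemma choice2_bernstein_delta i j : i != j ->
  bernstein (E2 c) (fun c' => delta c' i j - E2 c (fun c'' => delta c'' i j))
    (2 / N) (1 / N * (a i + a j) * (a i + a j + g)).
Proof.
move=> neq_ij.
have ai_ge0 : 0 <= a i := alpha_ge0 c i; have aj_ge0 : 0 <= a j := alpha_ge0 c j.
apply: (bernstein_delta_round n_gt0 (choice2_law c n_gt0) (choice2_prob_ge0 c n_gt0)
          (choice2_prob_sum1 c) (step2E c)).
apply: le_trans (choice2_sum_fvar_le _) _.
rewrite !fmean_sqr_indicatorB // !fmean_indicatorB.
move: ai_ge0 aj_ge0; set u := a i; set w := a j => u_ge0 w_ge0.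
have -> : N * ((u ^+ 2 + w ^+ 2) / N ^+ 2 - 2 * ((u - w) / N) * ((u ^+ 2 - w ^+ 2) / N)
      + g * ((u + w) / N ^+ 2)) =
    (u ^+ 2 + w ^+ 2 - 2 * (u - w) * (u ^+ 2 - w ^+ 2) + g * (u + w)) / N by field.
rewrite (_ : 1 / N * (u + w) * (u + w + g) = (u + w) * (u + w + g) / N); last by ring.
rewrite ler_pM2r ?invr_gt0 //.
have : 0 <= (u - w) ^+ 2 * (u + w) by rewrite mulr_ge0 ?sqr_ge0 ?addr_ge0.
have : 0 <= u * w by rewrite mulr_ge0.
by nra.
Qed.

Lemma choice2_bernstein1_gamma :
  bernstein1 (E2 c) (fun c' => g - gamma c') (2 * Num.sqrt g / N) (8 / N * g ^+ 2).
Proof.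
have g_ge0 : 0 <= g := gamma_ge0 c.
have m3_ge : g ^+ 2 <= m3 := sqr_gamma_le_sum_alpha3 c n_gt0.
have m4_le : m4 <= g ^+ 2 := sum_alpha4_le c.
apply: (bernstein1_gamma_drop_round n_gt0 (choice2_law c n_gt0)
          (choice2_prob_ge0 c n_gt0) (choice2_prob_sum1 c) (step2E c)).
  under eq_bigr do rewrite fmean_choice2_prob.
  rewrite big_split /= -mulr_sumr (sum_by_opinion c n_gt0 drop) -/(fmean a drop).
  rewrite fmean_alpha_drop sum_vertices_const fmean_alpha2_drop !mulr0 addr0.
  apply: mulr_ge0_le0; first exact: ltW.
  by apply: mulr_ge0_le0; rewrite ?divr_ge0 ?subr_le0.
apply: le_trans (choice2_sum_fvar_le drop) _.
rewrite fmean_alpha_drop fmean_alpha2_drop2 fmean_alpha_drop2 mulr0 mul0r subr0.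
have -> : forall x y : R, N * ((2 / N) ^+ 2 * x + g * ((2 / N) ^+ 2 * y)) =
    4 / N * (x + g * y) by move=> x y; field.
rewrite (_ : 8 / N * g ^+ 2 = 4 / N * (2 * g ^+ 2)); last by ring.
rewrite ler_pM2l ?divr_gt0 //.
have : 0 <= g * m3 by rewrite mulr_ge0 // (le_trans (sqr_ge0 g)).
by nra.
Qed.

End BernsteinConditions.

Theorem lemma4p2 (R : realType) (n k : nat) (hn : (0 < n)%N) (hk : (0 < k)%N)
  (hkn : (k <= n)%N) (c : config n k) :
  (* 3-Majority *)
  [/\ (forall i : 'I_k,
         bernstein (E3 (R:=R) c)
           (fun c' => alpha c' i - E3 c (fun c'' => alpha c'' i))
           (1 / n%:R) (alpha c i / n%:R)),
      (forall i j : 'I_k, i != j ->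
         bernstein (E3 (R:=R) c)
           (fun c' => delta c' i j - E3 c (fun c'' => delta c'' i j))
           (2 / n%:R) (2 / n%:R * (alpha c i + alpha c j)))
    & bernstein1 (E3 (R:=R) c)
        (fun c' => gamma c - gamma c')
        (2 * Num.sqrt (gamma c) / n%:R)
        (4 / n%:R * (gamma c * Num.sqrt (gamma c)))]
  /\
  (* 2-Choices *)
  [/\ (forall i : 'I_k,
         bernstein (E2 (R:=R) c)
           (fun c' => alpha c' i - E2 c (fun c'' => alpha c'' i))
           (1 / n%:R) (alpha c i * (alpha c i + gamma c) / n%:R)),
      (forall i j : 'I_k, i != j ->
         bernstein (E2 (R:=R) c)
           (fun c' => delta c' i j - E2 c (fun c'' => delta c'' i j))
           (2 / n%:R)
           (1 / n%:R * (alpha c i + alpha c j) * (alpha c i + alpha c j + gamma c)))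
    & bernstein1 (E2 (R:=R) c)
        (fun c' => gamma c - gamma c')
        (2 * Num.sqrt (gamma c) / n%:R)
        (8 / n%:R * gamma c ^+ 2)].
Proof.
split; split.
- exact: maj3_bernstein_alpha c hn.
- exact: maj3_bernstein_delta c hn.
- exact: maj3_bernstein1_gamma c hn.
- exact: choice2_bernstein_alpha c hn.
- exact: choice2_bernstein_delta c hn.
- exact: choice2_bernstein1_gamma c hn.
Qed.
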